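(* Let $G(q)$ be a finite Chevalley group over $\mathbb{F}_q$ and let $P\subset G(q)$ be a proper parabolic subgroup. Then for every $g\in G(q)\setminus P$ one has $$ r_{PgP}(x) \le \frac{2|P|}{q} \quad\text{for all } x\in G(q).$$
   Context: $G(q)$ is a (possibly twisted) finite Chevalley group over the finite field $\mathbb{F}_q$ ($q$ a prime power), with its standard BN-pair structure: a Borel subgroup $B=UH$ with $U$ the unipotent radical and $H$ a Cartan subgroup. A parabolic subgroup is a subgroup of $G(q)$ containing a Borel subgroup. For $g\in G(q)$ and $x\in G(q)$, $r_{PgP}(x)$ denotes the number of pairs $(a,b)\in P\times P$ with $agb=x$. *)

From mathcomp Require Import all_boot all_fingroup all_solvable.
Set Implicit Arguments. Unset Strict Implicit. Unset Printing Implicit Defensive.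
Import GroupScope.

Definition BN_pair (gT : finGroupType) (G B N : {group gT})
    (S : {set coset_of (B :&: N)}) : Prop :=
  [/\ B \subset G, N \subset G, G :=: <<B :|: N>> & (B :&: N) <| N] /\
  [/\ S \subset N / (B :&: N),
      <<S>> = N / (B :&: N),
      (forall s, s \in S -> s != 1 /\ s ^+ 2 = 1),
      (forall s w, s \in S -> w \in N / (B :&: N) ->
          (val s : {set gT}) * B * val w \subset
            (B * val w * B) :|: (B * val (s * w) * B))
    & (forall s, s \in S -> (val s : {set gT}) * B * val s != B)].
Arguments BN_pair {gT} G B N S.

(* Split BN-pair of characteristic p with parameters at least q:
   B = U ><| H with U a normal p-subgroup and H = B :&: N, and for every
   simple reflection s one has |BsB| >= q |B| (i.e. q_s >= q). *)
Definition split_BN_pair_over (gT : finGroupType) (G B N U : {group gT})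
    (S : {set coset_of (B :&: N)}) (p q : nat) : Prop :=
  [/\ BN_pair G B N S,
      prime p & (exists2 k, 0 < k & q = p ^ k)%N] /\
  [/\ U <| B, p.-group U,
      U ><| (B :&: N) = B
    & (forall s, s \in S -> q * #|B| <= #|(B * (val s : {set gT}) * B)%g|)%N].
Arguments split_BN_pair_over {gT} G B N U S p q.

Definition parabolic (gT : finGroupType) (G B P : {group gT}) : Prop :=
  B \subset P /\ P \subset G.

Definition r_dc (gT : finGroupType) (P : {set gT}) (g x : gT) : nat :=
  #|[set ab : gT * gT | [&& ab.1 \in P, ab.2 \in P & ab.1 * g * ab.2 == x]]|.

From mathcomp Require Import all_boot all_fingroup all_solvable.
Set Implicit Arguments. Unset Strict Implicit. Unset Printing Implicit Defensive.
Import GroupScope.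

(* Two factorisations a g b = a' g b' of x differ by an element of
   P :&: P :^ g^-1, so r_{PgP}(x) is at most its order.  By the Bruhat
   decomposition g lies in B n P for some n in N, which we choose of minimal
   length in that (B,P)-double coset; then P :&: P :^ g^-1 and P :&: P :^ n^-1
   are conjugate.  As g is not in P, the image w of n in W has a reflection s
   with l(s w) < l(w).  If y is in B :&: P :^ n^-1 but n_s^-1 y n_s is not in
   B, the BN-pair axiom puts n_s^-1 y n_s in B n_s B, and the exchange
   property (BsB)(B s w B) = B w B then shows that n_s^-1 n, which represents
   the shorter s w, lies in B n P.  Hence B :&: P :^ n^-1 is contained in
   B :^ n_s^-1, whose intersection with B has order |B|^2 / |B n_s B| <= |B| / q.
   Finally |B| |K| <= |P| |B :&: K| for K = P :&: P :^ n^-1, so that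
   |K| q <= |P|, which is half the claimed bound. *)

Section DoubleCosets.
Variable gT : finGroupType.
Implicit Types (A C P K : {group gT}) (x y : gT).

Lemma dcoset_refl A C x : x \in A :* x * C.
Proof. by rewrite -{1}[x]mulg1 mem_mulg ?rcoset_refl. Qed.

Lemma dcoset_eq A C x y : y \in A :* x * C -> A :* y * C = A :* x * C.
Proof.
case/mulsgP=> _ c /mulsgP[a _ Aa /set1P-> ->] Cc ->.
by rewrite -!mulg_set1 -!mulgA [[set c] * _]lcoset_id // !mulgA rcoset_id.
Qed.

Lemma card_dcoset A x : (#|(A :* x * A)%g| * #|A :&: A :^ x^-1| = #|A| * #|A|)%N.
Proof.
have -> : #|A :* x * A| = #|A * A :^ x^-1|.
  by rewrite -(card_rcoset _ x^-1) conjsgE invgK !mulgA.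
by rewrite -{2}(cardJg A x^-1) mul_cardG.
Qed.

Lemma mul_cardG_leq A K P :
  A \subset P -> K \subset P -> (#|A| * #|K| <= #|P| * #|A :&: K|)%N.
Proof.
move=> sAP sKP; rewrite mul_cardG leq_mul2r subset_leq_card ?orbT //.
by rewrite mul_subG.
Qed.

Lemma card_conjI_dcoset P x y :
  y \in P :* x * P -> #|P :&: P :^ y^-1| = #|P :&: P :^ x^-1|.
Proof.
case/mulsgP=> _ b /mulsgP[a _ Pa /set1P-> ->] Pb ->.
rewrite !invMg !conjsgM (conjGid (groupVr Pb)) -(cardJg _ a).
by rewrite conjIg -!conjsgM mulVg mulg1 conjGid.
Qed.

Lemma r_dc_leq P g x : r_dc P g x <= #|P :&: P :^ g^-1|.
Proof.
rewrite /r_dc; set R := [set ab : gT * gT | _].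
have [->|[[a0 b0] R0]] := set_0Vmem R; first by rewrite cards0.
move: (R0); rewrite inE /= => /and3P[Pa0 Pb0 /eqP def_x].
have inj : {in R &, injective (fun ab : gT * gT => a0^-1 * ab.1)}.
  move=> [a b] [a' b']; rewrite !inE /= => /and3P[_ _ /eqP E] /and3P[_ _ /eqP E'].
  move=> /mulgI Ea; rewrite -{}Ea in E' *; congr pair.
  by apply: (@mulgI _ (a * g)); rewrite E' E.
rewrite -(card_in_imset inj); apply/subset_leq_card/subsetP=> z /imsetP[[a b]].
rewrite inE /= => /and3P[Pa Pb /eqP E] ->.
rewrite inE groupM ?groupV //= mem_conjg invgK.
have -> : (a0^-1 * a) ^ g = b0 * b^-1.
  by apply: (@mulgI _ (a0 * g)); rewrite conjgE !mulgA mulgK mulgV mul1g def_x -E mulgK.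
by rewrite groupM ?groupV.
Qed.

End DoubleCosets.

Section BNPair.
Variables (gT : finGroupType) (G B N : {group gT}) (S : {set coset_of (B :&: N)}).
Hypothesis BN : BN_pair G B N S.

Local Notation H := (B :&: N).
Local Notation W := (N / H).

Let sHB : H \subset B := subsetIl B N.
Let nHN : N \subset 'N(H). Proof. by case: BN => [[_ _ _ /normal_norm]]. Qed.
Let genS : <<S>> = W. Proof. by case: BN => _ []. Qed.
Let sSW : S \subset W. Proof. by case: BN => _ []. Qed.

Lemma reflection_neq1 s : s \in S -> s != 1.
Proof. by case: BN => _ [_ _ S2 _ _] /S2[]. Qed.

Lemma reflection_sqr s : s \in S -> s * s = 1.
Proof. by case: BN => _ [_ _ S2 _ _] /S2[]. Qed.

Lemma reflection_inv s : s \in S -> s^-1 = s.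
Proof. by move=> Ss; apply/eqP; rewrite eq_invg_mul reflection_sqr. Qed.

Definition cell (w : coset_of H) : {set gT} := B * val w * B.

Lemma cell_coset n : n \in 'N(H) -> cell (coset H n) = B :* n * B.
Proof. by move=> nHn; rewrite /cell /= val_coset // mulgA mulGSid. Qed.

Lemma mem_cell_coset n : n \in 'N(H) -> n \in cell (coset H n).
Proof. by move=> nHn; rewrite cell_coset ?dcoset_refl. Qed.

Lemma cell_eq v w x : x \in cell v -> x \in cell w -> cell v = cell w.
Proof.
rewrite -(coset_reprK v) -(coset_reprK w) !cell_coset ?repr_coset_norm //.
by move=> /dcoset_eq <- /dcoset_eq <-.
Qed.

Lemma cell1 : cell 1 = B.
Proof. by rewrite /cell /= genGid mulGSid ?mulGid. Qed.

Lemma cellV w : cell w^-1 = (cell w)^-1.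
Proof. by rewrite /cell !invMg !invGid mulgA. Qed.

Lemma mulB_cell w : B * cell w = cell w.
Proof. by rewrite /cell !mulgA mulGid. Qed.

Lemma mul_cellB w : cell w * B = cell w.
Proof. by rewrite /cell -mulgA mulGid. Qed.

Lemma cellM_sub v w : cell (v * w) \subset cell v * cell w.
Proof.
rewrite /cell !mulgA -(mulgA _ B B) mulGid.
by rewrite !mulSg // mulg_subl.
Qed.

Lemma cell_mulSl s w :
  s \in S -> w \in W -> cell s * cell w \subset cell w :|: cell (s * w).
Proof.
case: BN => _ [_ _ _ BNax _] Ss Ww.
have := mulSg B (mulgS B (BNax s w Ss Ww)).
rewrite mulgU mulUg -/(cell w) -/(cell (s * w)) !mulB_cell !mul_cellB.
by rewrite /cell !mulgA -(mulgA _ B B) mulGid.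
Qed.

Lemma cell_mulSr w s :
  s \in S -> w \in W -> cell w * cell s \subset cell w :|: cell (w * s).
Proof.
move=> Ss Ww; rewrite -invSg invMg invUg -!cellV invMg reflection_inv //.
exact: cell_mulSl (groupVr Ww).
Qed.

(* [(1 |: S) ^+ k] is the set of products of at most [k] reflections; [len]
   is the length function of [W], with junk value 0 outside [<<S>>]. *)
Lemma len_exists w : exists k, (w \in <<S>>) ==> (w \in (1 |: S) ^+ k).
Proof. by have [k defS] := gen_expgs S; exists k; rewrite -defS implybb. Qed.

Definition len w := ex_minn (len_exists w).

Lemma mem_len w : w \in W -> w \in (1 |: S) ^+ len w.
Proof. by rewrite -genS /len => Ww; case: ex_minnP => k; rewrite Ww. Qed.

Lemma len_min w k : w \in (1 |: S) ^+ k -> len w <= k.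
Proof. by move=> wk; rewrite /len; case: ex_minnP => m _; apply; rewrite wk implybT. Qed.

Lemma len_eq0 w : w \in W -> len w = 0 -> w = 1.
Proof. by move=> /mem_len + len0; rewrite len0 => /set1gP. Qed.

Lemma len_mulSl s w : s \in S -> w \in W -> len (s * w) <= (len w).+1.
Proof. by move=> Ss Ww; apply: len_min; rewrite expgS mem_mulg ?mem_len // !inE Ss orbT. Qed.

Lemma len_mulSr w s : s \in S -> w \in W -> len (w * s) <= (len w).+1.
Proof. by move=> Ss Ww; apply: len_min; rewrite expgSr mem_mulg ?mem_len // !inE Ss orbT. Qed.

Lemma len_descentl w :
  w \in W -> 0 < len w -> exists2 s, s \in S & (len (s * w)).+1 = len w.
Proof.
move=> Ww len_gt0; have := mem_len Ww; case def_k: (len w) len_gt0 => [//|k] _.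
rewrite expgS => /mulsgP[s v]; rewrite !inE => /orP[/eqP-> | Ss] vk def_w.
  by have := len_min vk; rewrite -(mul1g v) -def_w def_k ltnn.
have Wv : v \in W by rewrite -(mulKg s v) -def_w groupM ?groupV // (subsetP sSW).
exists s => //; rewrite def_w mulgA reflection_sqr // mul1g.
by apply/eqP; rewrite eqSS eqn_leq len_min //= -ltnS -def_k def_w len_mulSl.
Qed.

Lemma len_descentr w :
  w \in W -> 0 < len w -> exists2 s, s \in S & (len (w * s)).+1 = len w.
Proof.
move=> Ww len_gt0; have := mem_len Ww; case def_k: (len w) len_gt0 => [//|k] _.
rewrite expgSr => /mulsgP[v s] vk; rewrite !inE => /orP[/eqP-> | Ss] def_w.
  by have := len_min vk; rewrite -(mulg1 v) -def_w def_k ltnn.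
have Wv : v \in W by rewrite -(mulgK s v) -def_w groupM ?groupV // (subsetP sSW).
exists s => //; rewrite def_w -mulgA reflection_sqr // mulg1.
by apply/eqP; rewrite eqSS eqn_leq len_min //= -ltnS -def_k def_w len_mulSr.
Qed.

Lemma mem_cell_repr (w : coset_of H) : repr w \in cell w.
Proof. by rewrite -{2}(coset_reprK w) mem_cell_coset ?repr_coset_norm. Qed.

Lemma cell_inj : {in W &, injective cell}.
Proof.
suff le_inj n w w' : len w < n -> w \in W -> w' \in W -> len w <= len w' ->
    cell w = cell w' -> w = w'.
  move=> w w' Ww Ww' eq_cell; have [le_ww'|/ltnW le_w'w] := leqP (len w) (len w').
    exact: (le_inj (len w).+1).
  exact/esym/(le_inj (len w').+1).
elim: n w w' => // n IHn w w' lt_w_n Ww Ww' le_ww'.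
have [/(len_eq0 Ww)-> | len_gt0] := posnP (len w).
  case/morphimP: Ww' => n' _ Nn' ->; rewrite cell1 => cellB.
  apply/esym/coset_id; rewrite inE Nn' andbT cellB.
  by rewrite mem_cell_coset // (subsetP nHN).
move=> eq_cell.
have [s Ss len_sw] := len_descentl Ww len_gt0.
have Wsw : s * w \in W by rewrite groupM // (subsetP sSW).
have Wsw' : s * w' \in W by rewrite groupM // (subsetP sSW).
have lt_sw_n : len (s * w) < n by rewrite -ltnS len_sw.
have : repr (s * w) \in cell w' :|: cell (s * w').
  apply: (subsetP (cell_mulSl Ss Ww')); rewrite -eq_cell.
  exact: (subsetP (cellM_sub s w)) (mem_cell_repr _).
case/setUP=> /(cell_eq (mem_cell_repr _)) eq_cell'.
  have def_w' : s * w = w' by apply: IHn; rewrite // (leq_trans _ le_ww') // -len_sw.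
  by move: le_ww'; rewrite -def_w' -len_sw ltnn.
apply: (mulgI s); apply: IHn; rewrite // -ltnS len_sw (leq_trans le_ww') //.
by rewrite -{1}[w'](mulKg s) reflection_inv ?len_mulSl.
Qed.

Lemma len_mulSl_lt s w x :
  s \in S -> w \in W -> x \in cell s * cell w -> x \in cell w -> len (s * w) < len w.
Proof.
move=> Ss; have Ws := subsetP sSW s Ss.
move: {2}(len w).+1 (ltnSn (len w)) => n.
elim: n w x => // n IHn w x lt_w_n Ww x_sw x_w.
have [/(len_eq0 Ww) w1 | len_gt0] := posnP (len w).
  move: x_sw x_w; rewrite w1 {1}cell1 mul_cellB => x_s x_1.
  by case/eqP: (reflection_neq1 Ss); apply: cell_inj; rewrite ?(cell_eq x_s x_1).
have [t St] := len_descentr Ww len_gt0.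
have Wwt : w * t \in W by rewrite groupM // (subsetP sSW).
have def_w : w = w * t * t by rewrite -mulgA reflection_sqr // mulg1.
move: (w * t) Wwt def_w => v Wv def_w len_v.
have Wsv : s * v \in W by rewrite groupM.
move: x_sw; rewrite {1}def_w => /(subsetP (mulgS _ (cellM_sub v t))).
rewrite mulgA => /mulsgP[y z y_sv_v z_t def_x].
have /setUP[y_v | y_sv] := subsetP (cell_mulSl Ss Wv) y y_sv_v.
  have lt_sv : len (s * v) < len v by apply: (IHn v y) => //; rewrite -ltnS len_v.
  by rewrite {1}def_w mulgA (leq_ltn_trans (len_mulSr St Wsv)) // -len_v ltnS.
have := subsetP (cell_mulSr St Wsv) x; rewrite def_x mem_mulg // -def_x -mulgA -def_w.
case/(_ isT)/setUP=> [x_sv | x_sw].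
  by rewrite {1}(cell_inj Ww Wsv (cell_eq x_w x_sv)) mulgA reflection_sqr // mul1g -len_v.
case/eqP: (reflection_neq1 Ss); apply: (mulIg w); rewrite mul1g.
by apply: cell_inj; rewrite ?groupM ?(cell_eq x_sw x_w).
Qed.

Lemma cell_mulSl_ascent s w :
  s \in S -> w \in W -> len w <= len (s * w) -> cell s * cell w \subset cell (s * w).
Proof.
move=> Ss Ww le_len; apply/subsetP=> x x_sw.
have /setUP[x_w|//] := subsetP (cell_mulSl Ss Ww) x x_sw.
by have := len_mulSl_lt Ss Ww x_sw x_w; rewrite ltnNge le_len.
Qed.

Lemma bruhat_decomposition g : g \in G -> exists2 w, w \in W & g \in cell w.
Proof.
(* The a with a *: U \subset U form a group containing B and N, hence G. *)
set U := \bigcup_(w in W) cell w.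
have stabU : group_set [set a | a *: U \subset U].
  apply/group_setP; split=> [|a b]; first by rewrite inE lcoset1.
  by rewrite !inE lcosetM => aU bU; apply: subset_trans aU; rewrite lcosetS.
pose T := Group stabU.
have inT a : (forall w, w \in W -> a *: cell w \subset U) -> a \in T.
  move=> aU; rewrite inE; apply/subsetP=> _ /lcosetP[y /bigcupP[w Ww y_w] ->].
  by apply: (subsetP (aU w Ww)); rewrite mem_lcoset mulKg.
have sBT : B \subset T.
  apply/subsetP=> b Bb; apply: inT => w Ww.
  by rewrite -mulB_cell mulgA lcoset_id // mulB_cell (bigcup_max w).
have sNT : N \subset T.
  rewrite -(quotientSGK nHN (subset_trans sHB sBT)) -genS gen_subG.
  apply/subsetP=> s Ss; have /morphimP[n _ Nn def_s] := subsetP sSW s Ss.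
  rewrite def_s mem_quotient //; apply: inT => w Ww.
  apply: subset_trans (mulSg _ _) (subset_trans (cell_mulSl Ss Ww) _).
    by rewrite sub1set def_s mem_cell_coset // (subsetP nHN).
  by rewrite subUset (bigcup_max w) // (bigcup_max (s * w)) // groupM // (subsetP sSW).
case: BN => [[_ _ defG _] _] Gg.
have /subsetP/(_ g Gg) : G \subset T by rewrite defG gen_subG subUset sBT.
rewrite inE => /subsetP gU; apply/bigcupP/gU.
by rewrite mem_lcoset mulVg; apply/bigcupP; exists 1; rewrite ?group1 // cell1.
Qed.

Definition minimal_rep (P : {set gT}) n :=
  {in N, forall m, m \in B :* n * P -> len (coset H n) <= len (coset H m)}.

Lemma minimal_rep_conj_sub (P : {group gT}) n ns :
    B \subset P -> n \in N -> ns \in N -> coset H ns \in S ->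
    len (coset H ns * coset H n) < len (coset H n) ->
    minimal_rep P n ->
  B :&: P :^ n^-1 \subset B :^ ns^-1.
Proof.
move=> sBP Nn Nns Ss lt_len n_min.
have nHns := subsetP nHN ns Nns; have nHn := subsetP nHN n Nn.
set s := coset H ns in Ss lt_len *; set w := coset H n in lt_len n_min *.
have Ws : s \in W := subsetP sSW s Ss.
have Wsw : s * w \in W by rewrite groupM ?mem_quotient.
have def_sw : coset H (ns^-1 * n) = s * w.
  by rewrite morphM ?groupV // morphV // reflection_inv.
apply/subsetP=> y /setIP[By]; rewrite !mem_conjg !invgK => Pyn.
have le_len := ltnW lt_len.
apply: contraLR lt_len => ys_notB; rewrite -leqNgt -def_sw.
apply: n_min; first by rewrite groupM ?groupV.
have ys_s : y ^ ns \in cell s.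
  have: y ^ ns \in cell s * cell s.
    rewrite conjgE mulgA mem_mulg ?mem_cell_coset // -mul_cellB mem_mulg //.
    by rewrite -[s]reflection_inv // -morphV ?mem_cell_coset ?groupV.
  case/(subsetP (cell_mulSl Ss Ws))/setUP=> //.
  by rewrite reflection_sqr // cell1 (negPf ys_notB).
have yn_w : ns^-1 * y * n \in cell w.
  have := cell_mulSl_ascent Ss Wsw; rewrite mulgA reflection_sqr // mul1g.
  move=> /(_ le_len)/subsetP; apply.
  have -> : ns^-1 * y * n = y ^ ns * (ns^-1 * n) by rewrite conjgE !mulgA mulgK.
  by rewrite mem_mulg // -def_sw mem_cell_coset ?groupM ?groupV.
have -> : ns^-1 * n = ns^-1 * y * n * (y ^ n)^-1.
  by rewrite -conjVg conjgE !mulgA !mulgK.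
by rewrite -(mulSGid sBP) mulgA mem_mulg -?cell_coset ?groupV.
Qed.

Lemma minimal_rep_card_conjI (P : {group gT}) q n :
    (forall s, s \in S -> q * #|B| <= #|cell s|)%N ->
    B \subset P -> n \in N -> n \notin P ->
    minimal_rep P n ->
  (#|P :&: P :^ n^-1| * q <= #|P|)%N.
Proof.
move=> hq sBP Nn nPn n_min.
have Wn : coset H n \in W := mem_quotient H Nn.
have [s Ss len_sn] : exists2 s, s \in S & (len (s * coset H n)).+1 = len (coset H n).
  apply: len_descentl; rewrite // lt0n; apply: contra nPn => /eqP/(len_eq0 Wn).
  by move/(coset_idr (subsetP nHN n Nn))/(subsetP (subset_trans sHB sBP)).
have /morphimP[ns _ Nns def_s] := subsetP sSW s Ss.
rewrite {}def_s in Ss len_sn.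
have sBPB : B :&: P :^ n^-1 \subset B :^ ns^-1.
  by apply: minimal_rep_conj_sub n_min; rewrite // -len_sn.
have le_BB : (q * #|B :&: B :^ ns^-1| <= #|B|)%N.
  have := leq_mul (hq _ Ss) (leqnn #|B :&: B :^ ns^-1|).
  by rewrite cell_coset ?(subsetP nHN) // card_dcoset mulnAC leq_pmul2r.
have le_BP := mul_cardG_leq sBP (subsetIl P (P :^ n^-1)).
rewrite setIA (setIidPl sBP) in le_BP.
have le_BPB : (#|B :&: P :^ n^-1| <= #|B :&: B :^ ns^-1|)%N.
  by rewrite subset_leq_card // subsetI subsetIl.
rewrite -(leq_pmul2l (cardG_gt0 B)) mulnA (leq_trans (leq_mul le_BP (leqnn q))) //.
rewrite -mulnA [(#|B| * _)%N]mulnC leq_mul2l (leq_trans _ le_BB) ?orbT //.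
by rewrite mulnC leq_mul2l le_BPB orbT.
Qed.

Lemma parabolic_conjI_bound (P : {group gT}) q g :
    (forall s, s \in S -> q * #|B| <= #|cell s|)%N ->
    B \subset P -> g \in G -> g \notin P ->
  (#|P :&: P :^ g^-1| * q <= #|P|)%N.
Proof.
move=> hq sBP Gg nPg.
have [_ /morphimP[n0 _ Nn0 ->] g_n0] := bruhat_decomposition Gg.
pose A := [set n in N | n \in B :* g * P].
have An0 : n0 \in A.
  rewrite cell_coset ?(subsetP nHN) // in g_n0.
  by rewrite inE Nn0 (subsetP (mulgS _ sBP)) // (dcoset_eq g_n0) dcoset_refl.
have [n /setIdP[Nn n_gP] n_min] := arg_minnP (fun n => len (coset H n)) An0.
have def_nP := dcoset_eq n_gP.
have g_nP : g \in B :* n * P by rewrite def_nP dcoset_refl.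
rewrite (card_conjI_dcoset (subsetP (mulSg _ (mulSg _ sBP)) g g_nP)).
apply: minimal_rep_card_conjI => //.
  apply: contra nPg => Pn; apply: (subsetP _ g g_nP).
  by rewrite !mul_subG ?sub1set.
by move=> m Nm; rewrite def_nP => m_gP; apply: n_min; apply/setIdP.
Qed.

End BNPair.

Theorem lemma10 (gT : finGroupType) (G B N U P : {group gT})
    (S : {set coset_of (B :&: N)}) (p q : nat) :
  split_BN_pair_over G B N U S p q ->
  parabolic G B P -> P != G ->
  forall g, g \in G -> g \notin P ->
  forall x, x \in G -> (r_dc P g x * q <= 2 * #|P|)%N.
Proof.
move=> [[BN _ _] [_ _ _ hq]] [sBP _] _ g Gg nPg x _.
apply: leq_trans (leq_mul (r_dc_leq P g x) (leqnn q)) _.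
apply: leq_trans (parabolic_conjI_bound BN hq sBP Gg nPg) _.
by rewrite leq_pmull.
Qed.
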